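(* Let $p$ be an odd prime, $K$ a field of characteristic $p$, $s\geq1$ an integer, and $n=1+p^s$. Let $X$ be the $n\times n$ matrix with entries $1$ in positions $(i,i+1)$, $1\leq i\leq n-1$, and $0$ elsewhere, and let $B=1+X$. Let $k$ be an integer with $1\leq k\leq s$, and let $A$ be the unique matrix in $\mathrm{U}_n(K)$ whose last column is zero except for the entry $1$ in position $(n,n)$ and which satisfies $ABA^{-1}=B^{1+p^k}$. Then the order of $A$ is $p^{s+1-k}$.
   Context: $\mathrm{U}_n(K)$ is the group of upper-triangular unipotent $n\times n$ matrices over $K$. (The existence and uniqueness of such $A$ is part of the setup.) *)

From HB Require Import structures.
From mathcomp Require Import all_boot all_order all_algebra.
Set Implicit Arguments. Unset Strict Implicit. Unset Printing Implicit Defensive.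
Import GRing.Theory.
Local Open Scope ring_scope.

(* X : the nilpotent matrix with 1 at positions (i, i+1) (0-indexed here) *)
Definition shiftX (K : fieldType) (n : nat) : 'M[K]_n :=
  \matrix_(i < n, j < n) ((j == i.+1 :> nat)%:R).

Definition unitriangular (K : fieldType) (n : nat) (A : 'M[K]_n) : Prop :=
  (forall i j : 'I_n, (j < i)%N -> A i j = 0) /\ (forall i : 'I_n, A i i = 1).

Definition mx_order_is (K : fieldType) (n : nat) (A : 'M[K]_n.+1) (m : nat) : Prop :=
  (0 < m)%N /\ A ^+ m = 1 /\ (forall r : nat, (0 < r)%N -> A ^+ r = 1 -> (m <= r)%N).

(* Conjugation by [A] raises [B = 1 + X] to the power [e = 1 + p^k], hence
   [A^m B A^-m = B^(e^m)].  The last basis vector is a cyclic vector for [X] and is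
   fixed by [A], so a power of [A] commuting with [X] is the identity: [A^m = 1] iff
   [B^(e^m) = B].  In characteristic [p], [B^(p^t) = 1 + X^(p^t)]; thus [B] has order
   [p^(s+1)] and [B^(1 + p^s a) = B + a X^(p^s)].  Finally, as [p] is odd,
   [(1 + p^k)^(p^j) = 1 + p^(k+j) a] with [p] not dividing [a], so [A^(p^(s+1-k)) = 1]
   while [A^(p^(s-k)) <> 1]. *)

From HB Require Import structures.
From mathcomp Require Import all_boot all_order all_algebra.
From mathcomp Require Import zify ring.
Import GRing.Theory.
Local Open Scope ring_scope.

Set Implicit Arguments. Unset Strict Implicit.

Section RingPowers.
Variable R : pzRingType.

Lemma expr_twist_r (x y : R) e j :
  x * y = y ^+ e * x -> x * y ^+ j = y ^+ (e * j) * x.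
Proof.
move=> xy; elim: j => [|j IH]; first by rewrite expr0 muln0 expr0 mulr1 mul1r.
by rewrite exprSr mulrA IH -mulrA xy mulrA -exprD mulnS addnC.
Qed.

Lemma expr_twist (x y : R) e m :
  x * y = y ^+ e * x -> x ^+ m * y = y ^+ (e ^ m) * x ^+ m.
Proof.
move=> xy; elim: m => [|m IH]; first by rewrite !expr0 expn0 expr1 mul1r mulr1.
by rewrite exprS -mulrA IH mulrA (expr_twist_r _ xy) -mulrA -exprS expnS.
Qed.

Lemma expr_gcdn_eq1 (x : R) m r :
  (0 < m)%N -> x ^+ m = 1 -> x ^+ r = 1 -> x ^+ gcdn m r = 1.
Proof.
move=> m0 xm xr; have [a _ /dvdnP[c Ec]] := Bezoutl r m0.
have : x ^+ (gcdn m r + a * r) = 1 by rewrite Ec mulnC exprM xm expr1n.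
by rewrite exprD mulnC exprM xr expr1n mulr1.
Qed.

Lemma expr_ppow_order (x : R) p j r : prime p ->
  x ^+ (p ^ j.+1) = 1 -> x ^+ (p ^ j) != 1 ->
  (0 < r)%N -> x ^+ r = 1 -> (p ^ j.+1 %| r)%N.
Proof.
move=> pp xpj1 xpj r0 xr.
have p_gt0 : (0 < p ^ j.+1)%N by rewrite expn_gt0 prime_gt0.
have xg := expr_gcdn_eq1 p_gt0 xpj1 xr.
have /(dvdn_pfactor _ _ pp)[i ij1 gi] := dvdn_gcdl (p ^ j.+1) r.
have [ij|ji] := leqP i j.
  have /dvdnP[q Eq] : (gcdn (p ^ j.+1) r %| p ^ j)%N by rewrite gi dvdn_exp2l.
  by move: xpj; rewrite Eq mulnC exprM xg expr1n eqxx.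
have ei : i = j.+1 by apply/eqP; rewrite eqn_leq ij1.
by rewrite -ei -gi dvdn_gcdr.
Qed.

End RingPowers.

Section LiftingExponent.
Local Open Scope nat_scope.

Lemma exp1Dn_cubic (y n : nat) :
  exists c, (1 + y) ^ n = 1 + n * y + 'C(n, 2) * y ^ 2 + y ^ 3 * c.
Proof.
elim: n => [|n [c IH]]; first by exists 0; rewrite expn0 mul0n muln0 bin_small.
by exists ('C(n, 2) + c + c * y); rewrite expnS IH binS bin1; ring.
Qed.

Lemma exp1Dn_prime (p t a : nat) : prime p -> odd p -> 1 <= t ->
  exists c, (1 + p ^ t * a) ^ p = 1 + p ^ t.+1 * (a + p * c).
Proof.
move=> pp op t1; have [c E] := exp1Dn_cubic (p ^ t * a) p.
have p2 : 2 < p by have := prime_gt1 pp; case: p op {pp E} => [|[|[]]].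
(* [p] divides ['C(p, 2)], and [y ^ 3] carries a spare factor [p ^ (2t - 1)]. *)
have /dvdnP[q Hq] := prime_dvd_bin (k := 2) pp p2.
exists (q * p ^ t.-1 * a ^ 2 + p ^ (t.-1 + t.-1) * a ^ 3 * c).
rewrite E Hq; case: t t1 {E} => [//|t] _ /=.
by rewrite !expnS !expnD; ring.
Qed.

Lemma exp1Dn_pexp (p k j : nat) : prime p -> odd p -> 1 <= k ->
  exists2 a, (1 + p ^ k) ^ (p ^ j) = 1 + p ^ (k + j) * a & ~~ (p %| a).
Proof.
move=> pp op k1; elim: j => [|j [a E na]].
  exists 1; first by rewrite expn0 expn1 addn0 muln1.
  by rewrite dvdn1 neq_ltn prime_gt1 ?orbT.
have [c Ec] := exp1Dn_prime a pp op (leq_trans k1 (leq_addr j k)).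
exists (a + p * c); last by rewrite dvdn_addl ?dvdn_mulr.
by rewrite expnS mulnC expnM E Ec addnS.
Qed.

End LiftingExponent.

Lemma unitriangular_unitmx (K : fieldType) n (A : 'M[K]_n) :
  unitriangular A -> A \in unitmx.
Proof.
case=> Alow Adiag; rewrite unitmxE -det_tr det_trig.
  by rewrite big1 ?unitr1 // => i _; rewrite mxE Adiag.
by apply/forallP => i; apply/forallP => j; apply/implyP => lt; rewrite mxE Alow.
Qed.

Lemma col_expr_id (R : pzRingType) n (A : 'M[R]_n.+1) j m :
  col j A = col j 1 -> col j (A ^+ m) = col j 1.
Proof.
have colM (B C : 'M[R]_n.+1) : col j (B *m C) = B *m col j C by rewrite !colE mulmxA.
move=> Aj; elim: m => [|m IH]; first by rewrite expr0.
by rewrite exprS -mulmxE colM IH -colM mulmx1.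
Qed.

Section ShiftMatrix.
Variables (K : fieldType) (n : nat).
Local Notation X := (shiftX K n.+1).

Lemma shiftX_expE i (a b : 'I_n.+1) : (X ^+ i) a b = (b == (a + i)%N :> nat)%:R.
Proof.
elim: i b => [|i IH] b; first by rewrite expr0 mxE addn0 eq_sym.
rewrite exprSr -mulmxE mxE.
under eq_bigr => l _ do rewrite IH mxE.
have [lt|ge] := ltnP (a + i) n.+1.
  rewrite (bigD1 (Ordinal lt)) //= eqxx mul1r big1 ?addr0 ?addnS // => l /eqP nl.
  by case: eqP => [E|]; [case: nl; apply: val_inj | rewrite mul0r].
rewrite big1 => [|l _]; first by case: eqP => // E; have := ltn_ord b; lia.
by case: eqP => [E|]; [have := ltn_ord l; lia | rewrite mul0r].
Qed.

Lemma shiftX_expr_eq0 i : (n < i)%N -> X ^+ i = 0.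
Proof.
move=> ni; apply/matrixP => a b; rewrite shiftX_expE mxE.
by case: eqP => // E; have := ltn_ord b; lia.
Qed.

Lemma col_shiftX_expr (j : 'I_n.+1) : col ord_max (X ^+ (n - j)%N) = col j 1.
Proof.
apply/colP => a; rewrite !mxE shiftX_expE /=.
suff -> : (n == (a + (n - j))%N) = (a == j) by [].
have jn := ltn_ord j; rewrite -(inj_eq val_inj) /=.
by apply/idP/idP => /eqP E; apply/eqP; lia.
Qed.

(* [e_n] is a cyclic vector for [X]: [e_j = X ^+ (n - j) *m e_n]. *)
Lemma commX_col_max_eq1 (M : 'M[K]_n.+1) :
  M * X = X * M -> col ord_max M = col ord_max 1 -> M = 1.
Proof.
move=> cMX Mlast.
have colM j : col j M = col j 1.
  have cMXj : M *m X ^+ (n - j)%N = X ^+ (n - j)%N *m M.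
    by rewrite !mulmxE; apply: commrX.
  rewrite [LHS]colE -col1 -col_shiftX_expr colE mulmxA cMXj.
  by rewrite -mulmxA -colE Mlast col1 -colE col_shiftX_expr.
by apply/matrixP => i j; have := congr1 (fun v : 'cV_n.+1 => v i ord0) (colM j); rewrite !mxE.
Qed.

Lemma twisted_expr_eq1 (A : 'M[K]_n.+1) e m :
  col ord_max A = col ord_max 1 -> A * (1 + X) = (1 + X) ^+ e * A ->
  A ^+ m = 1 <-> (1 + X) ^+ (e ^ m) = 1 + X.
Proof.
move=> Alast AB; have ABm := expr_twist m AB.
split=> [Am1|Bem]; first by move: ABm; rewrite Am1 mulr1 mul1r.
apply: commX_col_max_eq1; last exact: col_expr_id.
apply: (addrI (A ^+ m)).
by rewrite -{1}[A ^+ m]mulr1 -mulrDr ABm Bem mulrDl mul1r.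
Qed.

Lemma pchar_mx p : p \in [pchar K] -> p \in [pchar 'M[K]_n.+1].
Proof.
move=> pc; rewrite inE (pcharf_prime pc) /=.
by rewrite -(rmorph_nat (@scalar_mx K n.+1)) (pcharf0 pc) raddf0.
Qed.

Lemma shiftX1_expr_pexp p t : p \in [pchar K] -> (1 + X) ^+ (p ^ t) = 1 + X ^+ (p ^ t).
Proof.
move=> pc; elim: t => [|t IH]; first by rewrite expn0 !expr1.
rewrite expnSr exprM IH.
have := pFrobenius_autD_comm (pchar_mx pc) (commr_sym (commr1 (X ^+ (p ^ t)))).
by rewrite !pFrobenius_autE expr1n -exprM.
Qed.

End ShiftMatrix.

Section ShiftPower.
Variables (K : fieldType) (p s : nat).
Hypothesis pc : p \in [pchar K].
Local Notation X := (shiftX K (p ^ s).+1).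
Local Notation B := (1 + X).

Lemma shiftX1_expr_pexpS_mul a : B ^+ (1 + p ^ s.+1 * a) = B.
Proof.
have ps : (p ^ s < p ^ s.+1)%N by rewrite ltn_exp2l ?prime_gt1 ?(pcharf_prime pc).
by rewrite exprD expr1 exprM shiftX1_expr_pexp // shiftX_expr_eq0 // addr0 expr1n mulr1.
Qed.

(* [Z := X ^+ p ^ s] is the last nonzero power of [X], so [Z * B = Z] and [Z * Z = 0]. *)
Lemma shiftX1_expr_pexp_mul a : B ^+ (1 + p ^ s * a) = B + X ^+ (p ^ s) *+ a.
Proof.
have ps_gt0 : (0 < p ^ s)%N by rewrite expn_gt0 prime_gt0 ?(pcharf_prime pc).
have ZX : X ^+ (p ^ s) * X = 0 by rewrite -exprSr shiftX_expr_eq0.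
have ZZ : X ^+ (p ^ s) * X ^+ (p ^ s) = 0 by rewrite -exprD shiftX_expr_eq0 //; lia.
elim: a => [|a IH]; first by rewrite muln0 expr1 mulr0n addr0.
rewrite mulnS addnCA exprD IH shiftX1_expr_pexp //.
rewrite mulrDl mul1r !mulrDr mulrnAr mulr1 ZX ZZ mul0rn !addr0.
by rewrite mulrSr addrA.
Qed.

Lemma shiftX1_expr_pexp_mul_eq a : B ^+ (1 + p ^ s * a) = B -> (p %| a)%N.
Proof.
rewrite shiftX1_expr_pexp_mul -[RHS]addr0 => /addrI Za.
have := congr1 (fun M : 'M[K]_((p ^ s).+1) => M ord0 ord_max) Za.
by rewrite mulmxnE shiftX_expE mxE /= eqxx (dvdn_pcharf pc) => ->.
Qed.

End ShiftPower.

Unset Implicit Arguments.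

Theorem proposition3p6 (p : nat) (K : fieldType) (s k : nat)
  (A : 'M[K]_((p ^ s).+1)) :
  prime p -> odd p -> p \in [pchar K] ->
  (1 <= s)%N -> (1 <= k <= s)%N ->
  unitriangular A ->
  (forall i : 'I_((p ^ s).+1), A i ord_max = (i == ord_max)%:R) ->
  A *m (1 + shiftX K (p ^ s).+1) *m invmx A = (1 + shiftX K (p ^ s).+1) ^+ (1 + p ^ k) ->
  mx_order_is A (p ^ (s + 1 - k)).
Proof.
move=> pp op pc _ /andP[k1 ks] Atri Alast Hconj.
have AB : A * (1 + shiftX K (p ^ s).+1) = (1 + shiftX K (p ^ s).+1) ^+ (1 + p ^ k) * A.
  by rewrite -Hconj -!mulmxE mulmxKV ?unitriangular_unitmx.
have Alast_col : col ord_max A = col ord_max 1 by apply/colP => i; rewrite !mxE Alast.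
have Apow_eq1 j := twisted_expr_eq1 (p ^ j) Alast_col AB.
have -> : (s + 1 - k = (s - k).+1)%N by lia.
have [a Ea _] := exp1Dn_pexp (s - k).+1 pp op k1.
have [b Eb pb] := exp1Dn_pexp (s - k) pp op k1.
rewrite addnS subnKC // in Ea; rewrite subnKC // in Eb.
have A1 : A ^+ (p ^ (s - k).+1) = 1.
  by apply/Apow_eq1; rewrite Ea shiftX1_expr_pexpS_mul.
have An1 : A ^+ (p ^ (s - k)) != 1.
  apply/eqP => /Apow_eq1; rewrite Eb => /(shiftX1_expr_pexp_mul_eq pc).
  exact: (negP pb).
split; first by rewrite expn_gt0 prime_gt0.
split=> // r r0 Ar.
exact: dvdn_leq r0 (expr_ppow_order pp A1 An1 r0 Ar).
Qed.
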